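(* Let $a,b,c$ be pairwise distinct positive real numbers, and let $G_1,G_2$ be the metric graphs described in the context, with Dirichlet standard boundary conditions. Then $G_1$ and $G_2$ have different heat contents: there exists $t>0$ with $q_{G_1}(t)\neq q_{G_2}(t)$.
   Context: A compact metric graph is a finite connected graph without loops in which each edge $e$ is identified with an interval $[0,l_e]$. The Laplacian $\Delta$ acts as $\phi_e\mapsto\phi_e''$ on edges. Dirichlet standard boundary conditions (DSBC) require $H^2$ regularity on edges and the following vertex conditions: - continuity at vertices of degree $\ge2$; - vanishing at degree-one vertices; - at each vertex of degree $\ne1$, the sum of derivatives along incident edges directed into the vertex is zero. With $-\Delta$ having eigenvalues $\lambda$ and an orthonormal basis of real eigenfunctions $\phi_\lambda$, the heat content is $q_G(t)=\sum_\lambda e^{-\lambda t}(\int_G\phi_\lambda)^2$. The graph $G_1$ has 16 vertices: - a central vertex $o$; - three vertices $m_1,m_2,m_3$; - three vertices $w_1,w_2,w_3$; - nine vertices of degree one. The edges of $G_1$ are: - $o m_1$ of length $2c$, $o m_2$ of length $2a$, $o m_3$ of length $2b$; - $m_1 w_1$ of length $2b$, $m_2 w_2$ of length $2c$, $m_3 w_3$ of length $2a$; - a pendant edge (ending at a degree-one vertex) at $m_1$ of length $a$, at $m_2$ of length $b$, and at $m_3$ of length $c$; - two pendant edges at $w_1$ of lengths $a$ and $c$, two at $w_2$ of lengths $a$ and $b$, and two at $w_3$ of lengths $b$ and $c$. The graph $G_2$ is obtained from $G_1$ by interchanging the roles of $b$ and $c$. Explicitly, its edges are: - $o m_1$ of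 length $2b$, $o m_2$ of length $2a$, $o m_3$ of length $2c$; - $m_1w_1$ of length $2c$, $m_2w_2$ of length $2b$, $m_3w_3$ of length $2a$; - a pendant edge at $m_1$ of length $a$, at $m_2$ of length $c$, and at $m_3$ of length $b$; - two pendant edges at $w_1$ of lengths $a,b$, at $w_2$ of lengths $a,c$, and at $w_3$ of lengths $c,b$. *)

From Stdlib Require Import Reals List Arith ClassicalEpsilon.
Import ListNotations.
Open Scope R_scope.

(** An (oriented) edge is a triple (tail, head, length); vertices are natural
    numbers.  Edge [e] is identified with the interval [0, l_e], position 0
    being the tail and position l_e the head.  A function on the graph is [f : nat -> R -> R],
    [f i] being its restriction to edge number [i] (only values on
    [0, l_i] matter). *)
Definition edge : Type := (nat * nat * R)%type.
Definition mgraph : Type := list edge.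

Definition etail (G : mgraph) (i : nat) : nat :=
  let '(u, _, _) := nth i G (0%nat, 0%nat, 0) in u.
Definition ehead (G : mgraph) (i : nat) : nat :=
  let '(_, v, _) := nth i G (0%nat, 0%nat, 0) in v.
Definition elen (G : mgraph) (i : nat) : R :=
  let '(_, _, l) := nth i G (0%nat, 0%nat, 0) in l.

Definition esum (G : mgraph) (F : nat -> R) : R :=
  fold_right (fun i acc => F i + acc) 0 (seq 0 (length G)).

Definition degree (G : mgraph) (v : nat) : nat :=
  (length (filter (fun i => Nat.eqb (etail G i) v) (seq 0 (length G))) +
   length (filter (fun i => Nat.eqb (ehead G i) v) (seq 0 (length G))))%nat.

Definition eend (G : mgraph) (i : nat) (h : bool) : nat :=
  if h then ehead G i else etail G i.

Definition endval (G : mgraph) (f : nat -> R -> R) (i : nat) (h : bool) : R :=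
  if h then f i (elen G i) else f i 0.

(** Derivative of [f] (with derivative [d]) at the end [(i,h)], taken in the
    direction pointing into the vertex. *)
Definition inder (G : mgraph) (d : nat -> R -> R) (i : nat) (h : bool) : R :=
  if h then d i (elen G i) else - d i 0.

(** Riemann integral (0 if the function is not Riemann integrable). *)
Definition RInt (f : R -> R) (a b : R) : R :=
  match excluded_middle_informative (exists pr : Riemann_integrable f a b, True) with
  | left H => RiemannInt (proj1_sig (constructive_indefinite_description _ H))
  | right _ => 0
  end.

Definition gint (G : mgraph) (f : nat -> R -> R) : R :=
  esum G (fun i => RInt (f i) 0 (elen G i)).
Definition ip (G : mgraph) (f g : nat -> R -> R) : R :=
  esum G (fun i => RInt (fun x => f i x * g i x) 0 (elen G i)).

Definition DSBC (G : mgraph) (phi d : nat -> R -> R) : Prop :=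
  (forall v, (2 <= degree G v)%nat ->
     forall i j hi hj, (i < length G)%nat -> (j < length G)%nat ->
       eend G i hi = v -> eend G j hj = v ->
       endval G phi i hi = endval G phi j hj) /\
  (forall v, degree G v = 1%nat ->
     forall i hi, (i < length G)%nat -> eend G i hi = v -> endval G phi i hi = 0) /\
  (forall v, degree G v <> 1%nat ->
     esum G (fun i => (if Nat.eqb (ehead G i) v then inder G d i true else 0)
                    + (if Nat.eqb (etail G i) v then inder G d i false else 0)) = 0).

(** [phi] is a (real) eigenfunction of [-Laplacian] with DSBC and eigenvalue
    [lam]: on each edge it is (the restriction of) a twice differentiable
    function with [phi'' = - lam * phi] on [0, l_e] (H^2 regularity), and it
    satisfies the vertex conditions. *)
Definition is_eigenfunction (G : mgraph) (lam : R) (phi : nat -> R -> R) : Prop :=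
  exists d d2 : nat -> R -> R,
    (forall i x, (i < length G)%nat ->
       derivable_pt_lim (phi i) x (d i x) /\ derivable_pt_lim (d i) x (d2 i x)) /\
    (forall i x, (i < length G)%nat -> 0 <= x <= elen G i ->
       d2 i x = - lam * phi i x) /\
    DSBC G phi d.

(** Completeness is expressed by Parseval's identity on the dense class of
    continuous functions. *)
Definition eigenbasis (G : mgraph) (lam : nat -> R) (phi : nat -> nat -> R -> R) : Prop :=
  (forall n, is_eigenfunction G (lam n) (phi n)) /\
  (forall n m, ip G (phi n) (phi m) = if Nat.eqb n m then 1 else 0) /\
  (forall f : nat -> R -> R, (forall i, continuity (f i)) ->
     infinite_sum (fun n => (ip G f (phi n)) ^ 2) (ip G f f)).

Definition heat_content (G : mgraph) (lam : nat -> R) (phi : nat -> nat -> R -> R)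
  (t q : R) : Prop :=
  infinite_sum (fun n => exp (- lam n * t) * (gint G (phi n)) ^ 2) q.

(** The graphs G1 and G2.  Vertices: o = 0, m1 = 1, m2 = 2, m3 = 3,
    w1 = 4, w2 = 5, w3 = 6, degree-one vertices 7..15. *)
Definition G1 (a b c : R) : mgraph :=
  [ (0%nat, 1%nat, 2*c); (0%nat, 2%nat, 2*a); (0%nat, 3%nat, 2*b);
    (1%nat, 4%nat, 2*b); (2%nat, 5%nat, 2*c); (3%nat, 6%nat, 2*a);
    (1%nat, 7%nat, a); (2%nat, 8%nat, b); (3%nat, 9%nat, c);
    (4%nat, 10%nat, a); (4%nat, 11%nat, c); (5%nat, 12%nat, a); (5%nat, 13%nat, b); (6%nat, 14%nat, b); (6%nat, 15%nat, c) ].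

Definition G2 (a b c : R) : mgraph :=
  [ (0%nat, 1%nat, 2*b); (0%nat, 2%nat, 2*a); (0%nat, 3%nat, 2*c);
    (1%nat, 4%nat, 2*c); (2%nat, 5%nat, 2*b); (3%nat, 6%nat, 2*a);
    (1%nat, 7%nat, a); (2%nat, 8%nat, c); (3%nat, 9%nat, b);
    (4%nat, 10%nat, a); (4%nat, 11%nat, b); (5%nat, 12%nat, a); (5%nat, 13%nat, c); (6%nat, 14%nat, c); (6%nat, 15%nat, b) ].

From Pilot Require Import Defs.
From Stdlib Require Import Reals Lra Lia List ClassicalEpsilon FunctionalExtensionality Classical.
From Coquelicot Require Import Coquelicot.
Open Scope R_scope.

(* Let [w] be the torsion function of G ([-w'' = 1] with DSBC).  Green's formula gives
   [int phi_n = lam_n <w, phi_n>], so by Parseval [int_0^oo q_G = sum (int phi_n)^2 / lam_n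
   = int_G w], the torsional rigidity; this integral is recovered from [q_G] on [t > 0] through
   its Riemann sums.  Hence equal heat contents would force equal torsional rigidities.  On the
   trees G1, G2 the torsion function is an explicit quadratic on each edge, and the two
   rigidities differ by [(b - c) (a - b) (a - c)] times a positive rational function. *)

(** * Recovering the integral of the heat content from its values *)

Fixpoint exp_partial_sum (K : nat) (x : R) : R :=
  match K with O => 0 | S k => exp_partial_sum k x + exp (- INR K * x) end.

Definition riemann_kernel (K : nat) (x : R) : R := x * exp_partial_sum K x.

Fixpoint riemann_sum (Q : R -> R) (h : R) (K : nat) : R :=
  match K with O => 0 | S k => riemann_sum Q h k + h * Q (INR K * h) end.

Lemma exp_opp_mult_INR (K : nat) (x : R) : exp (- INR K * x) = exp (- x) ^ K.
Proof.
  induction K as [|K IH].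
  - simpl. replace (- 0 * x) with 0 by ring. apply exp_0.
  - rewrite S_INR, <- tech_pow_Rmult, <- IH, <- exp_plus. f_equal. ring.
Qed.

Lemma exp_opp_lt1 (x : R) : 0 < x -> 0 < exp (- x) < 1.
Proof.
  intros Hx. split; [apply exp_pos|].
  rewrite <- exp_0. apply exp_increasing. lra.
Qed.

Lemma exp_partial_sum_closed (K : nat) (x : R) :
  exp_partial_sum K x * (1 - exp (- x)) = exp (- x) * (1 - exp (- x) ^ K).
Proof.
  induction K as [|K IH].
  - simpl. ring.
  - change (exp_partial_sum (S K) x) with (exp_partial_sum K x + exp (- INR (S K) * x)).
    rewrite Rmult_plus_distr_r, IH, !exp_opp_mult_INR. simpl. ring.
Qed.

Lemma pow_unit_interval (r : R) (K : nat) : 0 < r < 1 -> 0 < r ^ K <= 1.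
Proof. intros Hr. split; [apply pow_lt | rewrite <- (pow1 K); apply pow_incr]; lra. Qed.

Lemma riemann_kernel_closed (K : nat) (x : R) : 0 < x ->
  riemann_kernel K x = x * exp (- x) * (1 - exp (- x) ^ K) / (1 - exp (- x)).
Proof.
  intros Hx. pose proof (exp_opp_lt1 x Hx).
  unfold riemann_kernel.
  replace (exp_partial_sum K x) with (exp_partial_sum K x * (1 - exp (- x)) / (1 - exp (- x)))
    by (field; lra).
  rewrite exp_partial_sum_closed. field. lra.
Qed.

Lemma riemann_kernel_0 (K : nat) : riemann_kernel K 0 = 0.
Proof. unfold riemann_kernel. ring. Qed.

(* With [r = exp (- x)], the bounds below come from [1 - x <= r <= 1 / (1 + x)]. *)
Lemma riemann_kernel_bounds (K : nat) (x : R) : 0 <= x -> 0 <= riemann_kernel K x <= 1.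
Proof.
  intros Hx. destruct (Req_dec x 0) as [->|Hx0]; [rewrite riemann_kernel_0; lra|].
  assert (Hxp : 0 < x) by lra.
  rewrite (riemann_kernel_closed K x Hxp).
  pose proof (exp_opp_lt1 x Hxp) as Hr. set (r := exp (- x)) in *.
  pose proof (pow_unit_interval r K Hr) as HrK.
  assert (Hrx : x * r <= 1 - r).
  { pose proof (exp_ineq1_le x) as He.
    assert (r * exp x = 1) by (unfold r; rewrite <- exp_plus, Rplus_opp_l; apply exp_0).
    nra. }
  split.
  - apply Rmult_le_pos; [|left; apply Rinv_0_lt_compat; lra].
    apply Rmult_le_pos; nra.
  - apply Rmult_le_reg_r with (1 - r); [lra|].
    unfold Rdiv. rewrite Rmult_assoc, Rinv_l, Rmult_1_r by lra. nra.
Qed.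

Lemma riemann_kernel_lower (K : nat) (x : R) : 0 < x ->
  1 - x - exp (- INR K * x) <= riemann_kernel K x.
Proof.
  intros Hx. rewrite (riemann_kernel_closed K x Hx), exp_opp_mult_INR.
  pose proof (exp_opp_lt1 x Hx) as Hr. set (r := exp (- x)) in *.
  pose proof (pow_unit_interval r K Hr) as HrK.
  assert (H1x : 1 - x <= r) by (pose proof (exp_ineq1_le (- x)); unfold r; lra).
  assert (Hq : 1 - x <= x * r / (1 - r)).
  { apply Rmult_le_reg_r with (1 - r); [lra|].
    unfold Rdiv. rewrite Rmult_assoc, Rinv_l, Rmult_1_r by lra. nra. }
  replace (x * r * (1 - r ^ K) / (1 - r)) with (x * r / (1 - r) * (1 - r ^ K)) by (field; lra).
  nra.
Qed.

Lemma is_series_0 : is_series (fun _ : nat => 0) 0.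
Proof.
  apply is_series_Reals. intros eps Heps. exists 0%nat. intros n _.
  assert (Hs : sum_f_R0 (fun _ => 0) n = 0) by (induction n; simpl; [|rewrite IHn]; ring).
  rewrite Hs. unfold Rdist. rewrite Rminus_0_r, Rabs_R0. lra.
Qed.

Lemma infinite_sum_le (a b : nat -> R) (la lb : R) :
  infinite_sum a la -> infinite_sum b lb -> (forall n, a n <= b n) -> la <= lb.
Proof.
  intros Ha Hb Hab.
  apply Rle_cv_lim with (Un := sum_f_R0 a) (Vn := sum_f_R0 b); [|exact Ha|exact Hb].
  intros n. apply sum_Rle. auto.
Qed.

Lemma partial_sum_le_infinite_sum (a : nat -> R) (l : R) :
  (forall n, 0 <= a n) -> infinite_sum a l -> forall N, sum_f_R0 a N <= l.
Proof.
  intros Ha Hl N. apply growing_ineq; [|exact Hl].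
  intros n. simpl. specialize (Ha (S n)). lra.
Qed.

Lemma exp_decay_eventually (a x d : R) : 0 <= a -> 0 < x -> 0 < d ->
  exists K0 : nat, forall K, (K0 <= K)%nat -> a * exp (- INR K * x) <= d.
Proof.
  intros Ha Hx Hd. destruct (INR_archimed (x * d) a) as [K0 HK0]; [nra|].
  exists K0. intros K HK. apply le_INR in HK.
  assert (HKx : a <= d * (INR K * x)).
  { assert (INR K0 * (x * d) <= INR K * (x * d)) by (apply Rmult_le_compat_r; nra). nra. }
  pose proof (exp_ineq1_le (INR K * x)).
  assert (Hinv : exp (- INR K * x) * exp (INR K * x) = 1).
  { rewrite <- exp_plus. replace (- INR K * x + INR K * x) with 0 by ring. apply exp_0. }
  set (E := exp (- INR K * x)) in *. assert (HE : 0 < E) by apply exp_pos.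
  assert (a * E <= d * (INR K * x) * E) by (apply Rmult_le_compat_r; lra).
  assert (d * (INR K * x) * E <= d * (exp (INR K * x) - 1) * E).
  { apply Rmult_le_compat_r; [lra|]. apply Rmult_le_compat_l; lra. }
  nra.
Qed.

Lemma sum_f_R0_affine (a b : nat -> R) (h d : R) (N : nat) :
  sum_f_R0 (fun n => a n - h * b n - d) N = sum_f_R0 a N - h * sum_f_R0 b N - (INR N + 1) * d.
Proof.
  induction N as [|N IH]; simpl sum_f_R0; [simpl; ring|].
  rewrite IH, S_INR. ring.
Qed.

(* The spectral data of a heat content [q(t) = sum_n exp (- lam n * t) * c n]:
   [c n = (int phi_n)^2], [e n = c n / lam n], [L = q(0)] and [T = int_0^oo q]. *)
Record heat_data (lam c e : nat -> R) (L T : R) : Prop := {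
  heat_lam_ge0 : forall n, 0 <= lam n;
  heat_e_ge0 : forall n, 0 <= e n;
  heat_c_eq : forall n, c n = lam n * e n;
  heat_e_eq0 : forall n, lam n = 0 -> e n = 0;
  heat_c_sum : infinite_sum c L;
  heat_e_sum : infinite_sum e T }.

Definition heat_series (lam c : nat -> R) (t : R) : R :=
  Series (fun n => exp (- lam n * t) * c n).

Section HeatData.
Variables (lam c e : nat -> R) (L T : R).
Hypothesis Hheat : heat_data lam c e L T.

Lemma heat_c_ge0 (n : nat) : 0 <= c n.
Proof. rewrite (heat_c_eq _ _ _ _ _ Hheat). apply Rmult_le_pos; apply Hheat. Qed.

Lemma heat_series_sum (t : R) : 0 <= t ->
  infinite_sum (fun n => exp (- lam n * t) * c n) (heat_series lam c t).
Proof.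
  intros Ht. apply is_series_Reals, Series_correct.
  apply (@ex_series_le R_AbsRing R_CompleteNormedModule _ c).
  - intros n. change (norm _) with (Rabs (exp (- lam n * t) * c n)).
    pose proof (heat_c_ge0 n).
    assert (exp (- lam n * t) <= 1).
    { pose proof (heat_lam_ge0 _ _ _ _ _ Hheat n).
      destruct (Req_dec (lam n * t) 0) as [Hz|Hz].
      - replace (- lam n * t) with 0 by lra. rewrite exp_0. lra.
      - left. rewrite <- exp_0. apply exp_increasing. nra. }
    pose proof (exp_pos (- lam n * t)).
    rewrite Rabs_pos_eq by (apply Rmult_le_pos; lra). nra.
  - exists L. apply is_series_Reals, Hheat.
Qed.

(* Since [c n = lam n * e n], a Riemann sum of the heat content sums the kernel against [e]. *)
Lemma is_series_riemann_sum (h : R) (K : nat) : 0 <= h ->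
  is_series (fun n => e n * riemann_kernel K (lam n * h)) (riemann_sum (heat_series lam c) h K).
Proof.
  intros Hh. induction K as [|K IH].
  - eapply is_series_ext; [|exact is_series_0].
    intros n. unfold riemann_kernel. simpl. ring.
  - assert (Ht : 0 <= INR (S K) * h) by (apply Rmult_le_pos; [apply pos_INR|lra]).
    pose proof (is_series_scal h _ _ (proj2 (is_series_Reals _ _) (heat_series_sum _ Ht))) as Hq.
    eapply is_series_ext; [|exact (is_series_plus _ _ _ _ IH Hq)].
    intros n. unfold riemann_kernel.
    change (exp_partial_sum (S K) (lam n * h))
      with (exp_partial_sum K (lam n * h) + exp (- INR (S K) * (lam n * h))).
    rewrite (heat_c_eq _ _ _ _ _ Hheat n).
    replace (- lam n * (INR (S K) * h)) with (- INR (S K) * (lam n * h)) by ring.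
    set (m := INR (S K)). unfold plus, scal; simpl. unfold mult; simpl. ring.
Qed.

Lemma riemann_sum_le (h : R) (K : nat) : 0 <= h -> riemann_sum (heat_series lam c) h K <= T.
Proof.
  intros Hh. apply (infinite_sum_le _ _ _ _
    (proj1 (is_series_Reals _ _) (is_series_riemann_sum h K Hh)) (heat_e_sum _ _ _ _ _ Hheat)).
  intros n. pose proof (heat_e_ge0 _ _ _ _ _ Hheat n).
  assert (Hx : 0 <= lam n * h) by (apply Rmult_le_pos; [apply Hheat|lra]).
  pose proof (riemann_kernel_bounds K _ Hx). nra.
Qed.

Lemma uniform_exp_decay (h d : R) (N : nat) : 0 < h -> 0 < d ->
  exists K : nat, forall n, (n <= N)%nat -> e n * exp (- INR K * (lam n * h)) <= d.
Proof.
  intros Hh Hd.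
  assert (Hone : forall n, exists K0 : nat, forall K, (K0 <= K)%nat ->
            e n * exp (- INR K * (lam n * h)) <= d).
  { intros n. destruct (Req_dec (lam n) 0) as [Hl|Hl].
    - exists 0%nat. intros K _. rewrite (heat_e_eq0 _ _ _ _ _ Hheat n Hl). lra.
    - apply exp_decay_eventually; [apply Hheat| |exact Hd].
      pose proof (heat_lam_ge0 _ _ _ _ _ Hheat n). apply Rmult_lt_0_compat; lra. }
  assert (Hall : exists K0 : nat, forall K, (K0 <= K)%nat -> forall n, (n <= N)%nat ->
            e n * exp (- INR K * (lam n * h)) <= d).
  { induction N as [|N [K1 HK1]].
    - destruct (Hone 0%nat) as [K0 HK0]. exists K0. intros K HK n Hn.
      replace n with 0%nat by lia. auto.
    - destruct (Hone (S N)) as [K2 HK2]. exists (Nat.max K1 K2). intros K HK n Hn.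
      destruct (Nat.eq_dec n (S N)) as [->|Hne]; [apply HK2; lia | apply HK1; lia]. }
  destruct Hall as [K HK]. exists K. apply HK. lia.
Qed.

(* Tail of [e] beyond [N] is small; up to [N] the kernel is close to 1 for large [K]. *)
Lemma riemann_sum_ge (eps h : R) : 0 < eps -> 0 < h ->
  exists K, T - eps - h * L <= riemann_sum (heat_series lam c) h K.
Proof.
  intros Heps Hh.
  destruct (heat_e_sum _ _ _ _ _ Hheat (eps / 2)) as [N HN]; [lra|].
  specialize (HN N (Nat.le_refl N)). unfold Rdist in HN. apply Rabs_def2 in HN.
  set (d := eps / (2 * (INR N + 1))).
  assert (Hd : 0 < d) by (unfold d; pose proof (pos_INR N); apply Rdiv_lt_0_compat; lra).
  destruct (uniform_exp_decay h d N Hh Hd) as [K HK]. exists K.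
  assert (Hser := proj1 (is_series_Reals _ _) (is_series_riemann_sum h K (Rlt_le _ _ Hh))).
  assert (Hpart : sum_f_R0 (fun n => e n * riemann_kernel K (lam n * h)) N
                  <= riemann_sum (heat_series lam c) h K).
  { apply partial_sum_le_infinite_sum; [|exact Hser].
    intros n. apply Rmult_le_pos; [apply Hheat|]. apply riemann_kernel_bounds.
    apply Rmult_le_pos; [apply Hheat|lra]. }
  assert (HcL : sum_f_R0 c N <= L)
    by (apply partial_sum_le_infinite_sum; [apply heat_c_ge0|apply Hheat]).
  assert (Hcmp : sum_f_R0 (fun n => e n - h * c n - d) N
                 <= sum_f_R0 (fun n => e n * riemann_kernel K (lam n * h)) N).
  { apply sum_Rle. intros n Hn. specialize (HK n Hn).
    rewrite (heat_c_eq _ _ _ _ _ Hheat n).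
    pose proof (heat_e_ge0 _ _ _ _ _ Hheat n).
    destruct (Req_dec (lam n) 0) as [Hl|Hl].
    - rewrite Hl, (heat_e_eq0 _ _ _ _ _ Hheat n Hl), !Rmult_0_l. lra.
    - assert (Hx : 0 < lam n * h).
      { pose proof (heat_lam_ge0 _ _ _ _ _ Hheat n). apply Rmult_lt_0_compat; lra. }
      pose proof (riemann_kernel_lower K _ Hx). nra. }
  rewrite sum_f_R0_affine in Hcmp.
  assert (Hdd : (INR N + 1) * d = eps / 2) by (unfold d; pose proof (pos_INR N); field; lra).
  assert (h * sum_f_R0 c N <= h * L) by (apply Rmult_le_compat_l; lra).
  lra.
Qed.

End HeatData.

Lemma riemann_sum_ext (Q1 Q2 : R -> R) (h : R) (K : nat) : 0 < h ->
  (forall t, 0 < t -> Q1 t = Q2 t) -> riemann_sum Q1 h K = riemann_sum Q2 h K.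
Proof.
  intros Hh HQ. induction K as [|K IH]; [reflexivity|].
  change (riemann_sum Q1 h K + h * Q1 (INR (S K) * h)
          = riemann_sum Q2 h K + h * Q2 (INR (S K) * h)).
  rewrite IH, HQ; [reflexivity|].
  apply Rmult_lt_0_compat; [apply lt_0_INR; lia|lra].
Qed.

Lemma heat_data_total_le (lam1 c1 e1 : nat -> R) (L1 T1 : R)
  (lam2 c2 e2 : nat -> R) (L2 T2 : R) :
  heat_data lam1 c1 e1 L1 T1 -> heat_data lam2 c2 e2 L2 T2 ->
  (forall t, 0 < t -> heat_series lam1 c1 t = heat_series lam2 c2 t) -> T1 <= T2.
Proof.
  intros H1 H2 HQ.
  assert (HL1 : 0 <= L1).
  { apply (infinite_sum_le (fun _ => 0) c1 0 L1); [|apply H1|apply heat_c_ge0 with (1 := H1)].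
    apply is_series_Reals, is_series_0. }
  apply Rnot_lt_le. intros HT.
  set (eps := (T1 - T2) / 4).
  set (h := eps / (L1 + 1)).
  assert (Heps : 0 < eps) by (unfold eps; lra).
  assert (Hh : 0 < h) by (unfold h; apply Rdiv_lt_0_compat; lra).
  assert (HhL : h * L1 <= eps).
  { unfold h. replace (eps / (L1 + 1) * L1) with (eps * (L1 / (L1 + 1))) by (field; lra).
    assert (L1 / (L1 + 1) <= 1)
      by (apply Rmult_le_reg_r with (L1 + 1); [lra|]; field_simplify; lra).
    nra. }
  destruct (riemann_sum_ge _ _ _ _ _ H1 eps h Heps Hh) as [K HK].
  pose proof (riemann_sum_le _ _ _ _ _ H2 h K (Rlt_le _ _ Hh)).
  rewrite (riemann_sum_ext _ _ h K Hh HQ) in HK. unfold eps in *. lra.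
Qed.

Lemma heat_data_total_unique (lam1 c1 e1 : nat -> R) (L1 T1 : R)
  (lam2 c2 e2 : nat -> R) (L2 T2 : R) :
  heat_data lam1 c1 e1 L1 T1 -> heat_data lam2 c2 e2 L2 T2 ->
  (forall t, 0 < t -> heat_series lam1 c1 t = heat_series lam2 c2 t) -> T1 = T2.
Proof.
  intros H1 H2 HQ. apply Rle_antisym.
  - exact (heat_data_total_le _ _ _ _ _ _ _ _ _ _ H1 H2 HQ).
  - apply (heat_data_total_le _ _ _ _ _ _ _ _ _ _ H2 H1).
    intros t Ht. symmetry. auto.
Qed.

(** * Calculus on an edge *)

Lemma Defs_RInt_eq (f : R -> R) (l : R) : ex_RInt f 0 l -> Defs.RInt f 0 l = RInt f 0 l.
Proof.
  intros Hf. unfold Defs.RInt.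
  destruct (excluded_middle_informative _) as [H|H].
  - symmetry. apply RInt_Reals.
  - exfalso. apply H. exists (ex_RInt_Reals_0 _ _ _ Hf). exact I.
Qed.

Lemma continuous_of_derivable (f df : R -> R) :
  (forall x, derivable_pt_lim f x (df x)) -> forall x, continuous f x.
Proof.
  intros Hf x. apply (ex_derive_continuous (K := R_AbsRing) (V := R_NormedModule)).
  exists (df x). apply is_derive_Reals, Hf.
Qed.

Lemma ex_RInt_of_continuous (f : R -> R) (l : R) : (forall x, continuous f x) -> ex_RInt f 0 l.
Proof. intros Hf. apply (ex_RInt_continuous (V := R_CompleteNormedModule)). auto. Qed.

Ltac solve_continuous :=
  repeat match goal with
  | |- continuous (fun _ => ?c) _ => apply continuous_const
  | |- continuous (fun x => @?f x + @?g x) _ => apply (continuous_plus (V := R_NormedModule) f g)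
  | |- continuous (fun x => @?f x * @?g x) _ => apply (continuous_mult (K := R_AbsRing) f g)
  | H : forall x, continuous ?f x |- continuous ?f _ => apply H
  | H : forall x, continuous ?f x |- continuous (fun y => ?f y) _ => apply H
  end.

Lemma RInt_green_edge (u du d2u v dv d2v : R -> R) (al be l : R) : 0 <= l ->
  (forall x, derivable_pt_lim u x (du x)) -> (forall x, derivable_pt_lim du x (d2u x)) ->
  (forall x, derivable_pt_lim v x (dv x)) -> (forall x, derivable_pt_lim dv x (d2v x)) ->
  (forall x, 0 <= x <= l -> d2v x = al * v x + be) ->
  RInt (fun x => du x * dv x) 0 l + al * RInt (fun x => u x * v x) 0 l + be * RInt u 0 l
  = u l * dv l - u 0 * dv 0.
Proof.
  intros Hl Hu Hdu Hv Hdv Hode.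
  pose proof (continuous_of_derivable _ _ Hu) as Cu.
  pose proof (continuous_of_derivable _ _ Hdu) as Cdu.
  pose proof (continuous_of_derivable _ _ Hv) as Cv.
  pose proof (continuous_of_derivable _ _ Hdv) as Cdv.
  assert (Hder : is_RInt (fun x => du x * dv x + u x * (al * v x + be)) 0 l
                   (u l * dv l - u 0 * dv 0)).
  { apply (is_RInt_derive (fun x => u x * dv x)).
    - intros x Hx. rewrite Rmin_left, Rmax_right in Hx by lra.
      rewrite <- Hode by lra. apply is_derive_Reals, derivable_pt_lim_mult; auto.
    - intros x _. solve_continuous. }
  assert (Cdudv : forall x, continuous (fun x => du x * dv x) x) by (intros; solve_continuous).
  assert (Cuv : forall x, continuous (fun x => u x * v x) x) by (intros; solve_continuous).
  assert (Hsum := is_RInt_plus _ _ _ _ _ _ (RInt_correct _ _ _ (ex_RInt_of_continuous _ l Cdudv))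
    (is_RInt_plus _ _ _ _ _ _
       (is_RInt_scal _ _ _ al _ (RInt_correct _ _ _ (ex_RInt_of_continuous _ l Cuv)))
       (is_RInt_scal _ _ _ be _ (RInt_correct _ _ _ (ex_RInt_of_continuous u l Cu))))).
  apply is_RInt_ext with (g := fun x => du x * dv x + u x * (al * v x + be)) in Hsum.
  2:{ intros x _. unfold plus, scal; simpl. unfold mult; simpl. ring. }
  apply (is_RInt_unique (V := R_CompleteNormedModule)) in Hder, Hsum.
  rewrite <- Hder, Hsum. unfold plus, scal; simpl. unfold mult; simpl. ring.
Qed.

(** * Boundary terms of DSBC functions *)

Lemma esum_ext (G : mgraph) (F H : nat -> R) :
  (forall i, (i < length G)%nat -> F i = H i) -> esum G F = esum G H.
Proof.
  intros E. unfold esum.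
  assert (Hl : forall l, (forall i, In i l -> F i = H i) ->
            fold_right (fun i acc => F i + acc) 0 l = fold_right (fun i acc => H i + acc) 0 l).
  { induction l as [|j l IH]; simpl; intros Hl; [reflexivity|]. rewrite Hl, IH; auto. }
  apply Hl. intros i Hi. apply in_seq in Hi. apply E. lia.
Qed.

Lemma esum_plus (G : mgraph) (F H : nat -> R) :
  esum G (fun i => F i + H i) = esum G F + esum G H.
Proof. unfold esum. induction (seq 0 (length G)); simpl; [|rewrite IHl]; ring. Qed.

Lemma esum_scal (G : mgraph) (k : R) (F : nat -> R) : esum G (fun i => k * F i) = k * esum G F.
Proof. unfold esum. induction (seq 0 (length G)); simpl; [|rewrite IHl]; ring. Qed.

Lemma esum_nonneg (G : mgraph) (F : nat -> R) :
  (forall i, (i < length G)%nat -> 0 <= F i) -> 0 <= esum G F.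
Proof.
  intros E. unfold esum.
  assert (Hl : forall l, (forall i, In i l -> 0 <= F i) ->
            0 <= fold_right (fun i acc => F i + acc) 0 l).
  { induction l as [|j l IH]; simpl; intros Hl; [lra|].
    pose proof (Hl j (or_introl eq_refl)). pose proof (IH (fun i Hi => Hl i (or_intror Hi))). lra. }
  apply Hl. intros i Hi. apply in_seq in Hi. apply E. lia.
Qed.

Fixpoint vsum (V : nat) (F : nat -> R) : R :=
  match V with O => 0 | S v => vsum v F + F v end.

Lemma vsum_plus (V : nat) (F H : nat -> R) : vsum V (fun v => F v + H v) = vsum V F + vsum V H.
Proof. induction V as [|V IH]; simpl; [|rewrite IH]; ring. Qed.

Lemma vsum_0 (V : nat) : vsum V (fun _ => 0) = 0.
Proof. induction V as [|V IH]; simpl; [|rewrite IH]; ring. Qed.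

Lemma vsum_ext (V : nat) (F H : nat -> R) : (forall v, F v = H v) -> vsum V F = vsum V H.
Proof. intros E. induction V as [|V IH]; simpl; [|rewrite IH, E]; reflexivity. Qed.

Lemma vsum_indicator (V k : nat) (a : R) :
  vsum V (fun v => if Nat.eqb k v then a else 0) = if Nat.ltb k V then a else 0.
Proof.
  induction V as [|V IH]; [reflexivity|]. simpl vsum. rewrite IH.
  destruct (Nat.ltb_spec k V), (Nat.eqb_spec k V), (Nat.ltb_spec k (S V)); try lia; ring.
Qed.

Lemma vsum_esum (V : nat) (G : mgraph) (F : nat -> nat -> R) :
  vsum V (fun v => esum G (F v)) = esum G (fun i => vsum V (fun v => F v i)).
Proof.
  induction V as [|V IH]; simpl.
  - unfold esum. induction (seq 0 (length G)); simpl; [|rewrite <- IHl]; ring.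
  - rewrite IH, <- esum_plus. reflexivity.
Qed.

Definition vertex_bound (G : mgraph) : nat :=
  S (fold_right (fun i m => Nat.max (Nat.max (etail G i) (ehead G i)) m) 0%nat (seq 0 (length G))).

Lemma eend_lt_vertex_bound (G : mgraph) (i : nat) (h : bool) :
  (i < length G)%nat -> (eend G i h < vertex_bound G)%nat.
Proof.
  intros Hi. unfold vertex_bound.
  assert (Hl : forall l, In i l ->
    (Nat.max (etail G i) (ehead G i) <=
     fold_right (fun i m => Nat.max (Nat.max (etail G i) (ehead G i)) m) 0%nat l)%nat).
  { induction l as [|j l IH]; simpl; [contradiction|]. intros [->|Hin]; [lia|].
    specialize (IH Hin). lia. }
  specialize (Hl (seq 0 (length G)) ltac:(apply in_seq; lia)).
  destruct h; simpl; lia.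
Qed.

Lemma esum_by_vertex (G : mgraph) (A B : nat -> R) :
  esum G (fun i => A i + B i) =
  vsum (vertex_bound G) (fun v => esum G (fun i =>
    (if Nat.eqb (ehead G i) v then A i else 0) + (if Nat.eqb (etail G i) v then B i else 0))).
Proof.
  rewrite vsum_esum. apply esum_ext. intros i Hi.
  rewrite vsum_plus, !vsum_indicator.
  pose proof (eend_lt_vertex_bound G i true Hi). pose proof (eend_lt_vertex_bound G i false Hi).
  simpl in *. rewrite !(proj2 (Nat.ltb_lt _ _)) by assumption. reflexivity.
Qed.

Lemma degree_pos_of_end (G : mgraph) (v i : nat) (h : bool) :
  (i < length G)%nat -> eend G i h = v -> (1 <= degree G v)%nat.
Proof.
  intros Hi Hv. unfold degree.
  assert (Hin : In i (seq 0 (length G))) by (apply in_seq; lia).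
  destruct h; simpl in Hv; subst v.
  - assert (In i (filter (fun j => Nat.eqb (ehead G j) (ehead G i)) (seq 0 (length G))))
      by (apply filter_In; split; [exact Hin | apply Nat.eqb_refl]).
    destruct (filter (fun j => Nat.eqb (ehead G j) (ehead G i)) _); [contradiction|simpl; lia].
  - assert (In i (filter (fun j => Nat.eqb (etail G j) (etail G i)) (seq 0 (length G))))
      by (apply filter_In; split; [exact Hin | apply Nat.eqb_refl]).
    destruct (filter (fun j => Nat.eqb (etail G j) (etail G i)) _); [contradiction|simpl; lia].
Qed.

Section GreenBoundary.
Variables (G : mgraph) (u du v dv : nat -> R -> R).
Hypotheses (Hu : DSBC G u du) (Hv : DSBC G v dv).

Lemma vertex_boundary_term_factor (x : nat) (U : R) :
  (forall i h, (i < length G)%nat -> eend G i h = x -> endval G u i h = U) ->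
  esum G (fun i =>
    (if Nat.eqb (ehead G i) x then endval G u i true * inder G dv i true else 0) +
    (if Nat.eqb (etail G i) x then endval G u i false * inder G dv i false else 0)) =
  U * esum G (fun i =>
    (if Nat.eqb (ehead G i) x then inder G dv i true else 0) +
    (if Nat.eqb (etail G i) x then inder G dv i false else 0)).
Proof.
  intros HU. rewrite <- esum_scal. apply esum_ext. intros i Hi.
  destruct (Nat.eqb_spec (ehead G i) x) as [Eh|_], (Nat.eqb_spec (etail G i) x) as [Et|_];
    rewrite ?(HU i true Hi Eh), ?(HU i false Hi Et); ring.
Qed.

(* The value of [u] is common to all ends at a vertex (and 0 at leaves), while [v'] satisfies
   Kirchhoff's condition: each vertex contributes nothing. *)
Lemma vertex_boundary_term_0 (x : nat) :
  esum G (fun i =>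
    (if Nat.eqb (ehead G i) x then endval G u i true * inder G dv i true else 0) +
    (if Nat.eqb (etail G i) x then endval G u i false * inder G dv i false else 0)) = 0.
Proof.
  destruct Hu as [Hcont [Hleaf _]]. destruct Hv as [_ [_ Hkirch]].
  destruct (classic (exists i h, (i < length G)%nat /\ eend G i h = x))
    as [[i0 [h0 [Hi0 Hx0]]]|Hnone].
  - pose proof (degree_pos_of_end G x i0 h0 Hi0 Hx0) as Hdeg.
    destruct (Nat.eq_dec (degree G x) 1) as [Hd1|Hd1].
    + rewrite (vertex_boundary_term_factor x 0); [ring|].
      intros i h Hi Hx. exact (Hleaf x Hd1 i h Hi Hx).
    + rewrite (vertex_boundary_term_factor x (endval G u i0 h0)).
      * rewrite (Hkirch x Hd1). ring.
      * intros i h Hi Hx. apply (Hcont x ltac:(lia)); congruence.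
  - rewrite (vertex_boundary_term_factor x 0); [ring|].
    intros i h Hi Hx. exfalso. eauto.
Qed.

End GreenBoundary.

Lemma DSBC_boundary_sum (G : mgraph) (u du v dv : nat -> R -> R) :
  DSBC G u du -> DSBC G v dv ->
  esum G (fun i => u i (elen G i) * dv i (elen G i) - u i 0 * dv i 0) = 0.
Proof.
  intros Hu Hv.
  transitivity (esum G (fun i => endval G u i true * inder G dv i true
                                 + endval G u i false * inder G dv i false)).
  { apply esum_ext. intros i _. simpl. ring. }
  rewrite esum_by_vertex, (vsum_ext _ _ (fun _ => 0)), vsum_0; [reflexivity|].
  intros x. apply (vertex_boundary_term_0 G u du v dv Hu Hv).
Qed.

(** * Green's formula and the spectral data *)

Definition edgewise_continuous (G : mgraph) (f : nat -> R -> R) : Prop :=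
  forall i x, (i < length G)%nat -> continuous (f i) x.

Definition twice_derivable (G : mgraph) (f df d2f : nat -> R -> R) : Prop :=
  forall i x, (i < length G)%nat ->
    derivable_pt_lim (f i) x (df i x) /\ derivable_pt_lim (df i) x (d2f i x).

Lemma twice_derivable_continuous (G : mgraph) (f df d2f : nat -> R -> R) :
  twice_derivable G f df d2f -> edgewise_continuous G f /\ edgewise_continuous G df.
Proof.
  intros Hf. split; intros i x Hi;
    [apply (continuous_of_derivable _ (df i)) | apply (continuous_of_derivable _ (d2f i))];
    intros; apply Hf, Hi.
Qed.

Lemma continuity_edgewise_continuous (G : mgraph) (f : nat -> R -> R) :
  (forall i, continuity (f i)) -> edgewise_continuous G f.
Proof. intros Hf i x _. apply continuity_pt_filterlim, Hf. Qed.

Lemma ip_comm (G : mgraph) (f g : nat -> R -> R) : ip G f g = ip G g f.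
Proof.
  unfold ip. apply esum_ext. intros i _. f_equal.
  apply functional_extensionality. intros x. ring.
Qed.

Lemma gint_ip_one (G : mgraph) (f : nat -> R -> R) : gint G f = ip G (fun _ _ => 1) f.
Proof.
  unfold gint, ip. apply esum_ext. intros i _. f_equal.
  apply functional_extensionality. intros x. ring.
Qed.

Lemma ip_plusl (G : mgraph) (f g h : nat -> R -> R) :
  edgewise_continuous G f -> edgewise_continuous G g -> edgewise_continuous G h ->
  ip G (fun i x => f i x + g i x) h = ip G f h + ip G g h.
Proof.
  intros Cf Cg Ch. unfold ip. rewrite <- esum_plus. apply esum_ext. intros i Hi.
  assert (Cfi := fun x => Cf i x Hi). assert (Cgi := fun x => Cg i x Hi).
  assert (Chi := fun x => Ch i x Hi).
  rewrite !Defs_RInt_eq by (apply ex_RInt_of_continuous; intros; solve_continuous).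
  rewrite <- (RInt_plus (V := R_CompleteNormedModule))
    by (apply ex_RInt_of_continuous; intros; solve_continuous).
  apply RInt_ext. intros x _. unfold plus; simpl. ring.
Qed.

Lemma ip_self_ge0 (G : mgraph) (f : nat -> R -> R) :
  (forall i, (i < length G)%nat -> 0 <= elen G i) -> edgewise_continuous G f -> 0 <= ip G f f.
Proof.
  intros Hlen Cf. apply esum_nonneg. intros i Hi.
  assert (Cfi := fun x => Cf i x Hi).
  rewrite Defs_RInt_eq by (apply ex_RInt_of_continuous; intros; solve_continuous).
  apply RInt_ge_0; [apply Hlen, Hi| |intros; apply Rle_0_sqr].
  apply ex_RInt_of_continuous. intros; solve_continuous.
Qed.

(* Polarization of Parseval's identity. *)
Lemma eigenbasis_parseval_ip (G : mgraph) (lam : nat -> R) (phi : nat -> nat -> R -> R)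
  (f g : nat -> R -> R) :
  eigenbasis G lam phi -> (forall i, continuity (f i)) -> (forall i, continuity (g i)) ->
  infinite_sum (fun n => ip G f (phi n) * ip G g (phi n)) (ip G f g).
Proof.
  intros [Heig [_ Hpar]] Cf Cg.
  assert (Cphi : forall n, edgewise_continuous G (phi n)).
  { intros n. destruct (Heig n) as [d [d2 [Hd _]]].
    exact (proj1 (twice_derivable_continuous G (phi n) d d2 Hd)). }
  pose proof (continuity_edgewise_continuous G f Cf) as Ef.
  pose proof (continuity_edgewise_continuous G g Cg) as Eg.
  assert (Cfg : forall i, continuity (fun x => f i x + g i x))
    by (intros i; apply continuity_plus; auto).
  pose proof (continuity_edgewise_continuous G _ Cfg) as Efg.
  pose proof (proj2 (is_series_Reals _ _) (Hpar f Cf)) as Pf.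
  pose proof (proj2 (is_series_Reals _ _) (Hpar g Cg)) as Pg.
  pose proof (proj2 (is_series_Reals _ _) (Hpar _ Cfg)) as Pfg.
  set (fg := fun i x => f i x + g i x) in *.
  assert (Hfg : forall n, ip G fg (phi n) = ip G f (phi n) + ip G g (phi n))
    by (intros n; apply ip_plusl; auto).
  assert (Hfgfg : ip G fg fg = ip G f f + 2 * ip G f g + ip G g g).
  { unfold fg at 1. rewrite (ip_plusl G f g fg Ef Eg Efg).
    rewrite (ip_comm G f fg), (ip_comm G g fg).
    unfold fg. rewrite (ip_plusl G f g f), (ip_plusl G f g g), (ip_comm G g f) by auto. ring. }
  apply is_series_Reals.
  replace (ip G f g) with (scal (1 / 2) (minus (minus (ip G fg fg) (ip G f f)) (ip G g g)))
    by (rewrite Hfgfg; unfold scal, minus, plus, opp; simpl; unfold mult; simpl; field).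
  eapply is_series_ext;
    [|exact (is_series_scal _ _ _ (is_series_minus _ _ _ _ (is_series_minus _ _ _ _ Pfg Pf) Pg))].
  intros n. cbv beta. rewrite Hfg. unfold scal, minus, plus, opp; simpl. unfold mult; simpl. field.
Qed.

Definition is_torsion_function (G : mgraph) (w dw : nat -> R -> R) : Prop :=
  (forall i x, derivable_pt_lim (w i) x (dw i x) /\ derivable_pt_lim (dw i) x (-1)) /\
  DSBC G w dw.

Section Spectral.
Variable G : mgraph.
Hypothesis Hlen : forall i, (i < length G)%nat -> 0 <= elen G i.

Lemma ip_green (u du d2u v dv d2v : nat -> R -> R) (al be : R) :
  twice_derivable G u du d2u -> twice_derivable G v dv d2v ->
  (forall i x, (i < length G)%nat -> 0 <= x <= elen G i -> d2v i x = al * v i x + be) ->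
  DSBC G u du -> DSBC G v dv ->
  ip G du dv + al * ip G u v + be * gint G u = 0.
Proof.
  intros Hu Hv Hode Bu Bv. rewrite <- (DSBC_boundary_sum G u du v dv Bu Bv).
  destruct (twice_derivable_continuous _ _ _ _ Hu) as [Cu Cdu].
  destruct (twice_derivable_continuous _ _ _ _ Hv) as [Cv Cdv].
  unfold ip, gint. rewrite <- !esum_scal, <- !esum_plus. apply esum_ext. intros i Hi.
  assert (Cui := fun x => Cu i x Hi). assert (Cdui := fun x => Cdu i x Hi).
  assert (Cvi := fun x => Cv i x Hi). assert (Cdvi := fun x => Cdv i x Hi).
  rewrite !Defs_RInt_eq by (apply ex_RInt_of_continuous; intros; solve_continuous).
  apply (RInt_green_edge _ _ (d2u i) _ _ (d2v i)); auto; intros; apply Hu || apply Hv; exact Hi.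
Qed.

Lemma eigenvalue_ge0 (lam : R) (phi : nat -> R -> R) :
  is_eigenfunction G lam phi -> ip G phi phi = 1 -> 0 <= lam.
Proof.
  intros [d [d2 [Hd [Hode Hb]]]] Hnorm.
  pose proof (ip_green phi d d2 phi d d2 (- lam) 0 Hd Hd
                ltac:(intros; rewrite Hode by auto; ring) Hb Hb) as Henergy.
  pose proof (ip_self_ge0 G d Hlen (proj2 (twice_derivable_continuous _ _ _ _ Hd))).
  rewrite Hnorm in Henergy. lra.
Qed.

Variables w dw : nat -> R -> R.
Hypothesis Htors : is_torsion_function G w dw.

Lemma torsion_twice_derivable : twice_derivable G w dw (fun _ _ => -1).
Proof. intros i x _. apply Htors. Qed.

(* Testing [phi] against [-w'' = 1] and [w] against [-phi'' = lam phi]. *)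
Lemma gint_eigenfunction (lam : R) (phi : nat -> R -> R) :
  is_eigenfunction G lam phi -> gint G phi = lam * ip G w phi.
Proof.
  intros [d [d2 [Hd [Hode Hb]]]].
  pose proof (ip_green w dw _ phi d d2 (- lam) 0 torsion_twice_derivable Hd
                ltac:(intros; rewrite Hode by auto; ring) (proj2 Htors) Hb) as H1.
  pose proof (ip_green phi d d2 w dw _ 0 (-1) Hd torsion_twice_derivable
                ltac:(intros; cbv beta; ring) Hb (proj2 Htors)) as H2.
  rewrite ip_comm in H2. lra.
Qed.

Lemma eigenbasis_heat_data (lam : nat -> R) (phi : nat -> nat -> R -> R) :
  eigenbasis G lam phi ->
  heat_data lam (fun n => gint G (phi n) ^ 2) (fun n => lam n * ip G w (phi n) ^ 2)
            (ip G (fun _ _ => 1) (fun _ _ => 1)) (gint G w).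
Proof.
  intros Hbasis. pose proof Hbasis as [Heig [Hon _]].
  assert (Hlam : forall n, 0 <= lam n).
  { intros n. apply (eigenvalue_ge0 _ _ (Heig n)). rewrite Hon, Nat.eqb_refl. reflexivity. }
  assert (Hgint : forall n, gint G (phi n) = lam n * ip G w (phi n))
    by (intros n; apply gint_eigenfunction, Heig).
  assert (Cone : forall i : nat, continuity (fun _ => 1))
    by (intros; apply continuity_const; now intros ? ?).
  assert (Cw : forall i, continuity (w i)).
  { intros i x. apply derivable_continuous_pt. exists (dw i x). apply Htors. }
  constructor.
  - exact Hlam.
  - intros n. apply Rmult_le_pos; [apply Hlam | apply pow2_ge_0].
  - intros n. rewrite Hgint. ring.
  - intros n Hn. rewrite Hn. ring.
  - apply is_series_Reals.
    eapply is_series_ext;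
      [|apply is_series_Reals, (eigenbasis_parseval_ip G lam phi _ _ Hbasis Cone Cone)].
    intros n. simpl. rewrite <- gint_ip_one. ring.
  - apply is_series_Reals. rewrite gint_ip_one.
    eapply is_series_ext;
      [|apply is_series_Reals, (eigenbasis_parseval_ip G lam phi _ _ Hbasis Cone Cw)].
    intros n. simpl. rewrite <- gint_ip_one, Hgint. ring.
Qed.

End Spectral.

(** * Piecewise quadratic torsion functions *)

Definition vertex_quadratic (G : mgraph) (W : nat -> R) (i : nat) (t : R) : R :=
  W (etail G i) + (W (ehead G i) - W (etail G i)) * t / elen G i + t * (elen G i - t) / 2.

Definition vertex_quadratic_deriv (G : mgraph) (W : nat -> R) (i : nat) (t : R) : R :=
  (W (ehead G i) - W (etail G i)) / elen G i + elen G i / 2 - t.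

Definition quadratic_rigidity (G : mgraph) (W : nat -> R) : R :=
  esum G (fun i => elen G i * (W (etail G i) + W (ehead G i)) / 2 + elen G i ^ 3 / 12).

Section VertexQuadratic.
Variables (G : mgraph) (W : nat -> R).
Hypothesis Hlen : forall i, (i < length G)%nat -> 0 < elen G i.

Lemma vertex_quadratic_derivable (i : nat) (t : R) :
  derivable_pt_lim (vertex_quadratic G W i) t (vertex_quadratic_deriv G W i t) /\
  derivable_pt_lim (vertex_quadratic_deriv G W i) t (-1).
Proof.
  unfold vertex_quadratic, vertex_quadratic_deriv.
  split; apply is_derive_Reals; auto_derive; auto; unfold Rdiv; lra.
Qed.

Lemma endval_vertex_quadratic (i : nat) (h : bool) : (i < length G)%nat ->
  endval G (vertex_quadratic G W) i h = W (eend G i h).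
Proof.
  intros Hi. pose proof (Hlen i Hi).
  unfold endval, eend, vertex_quadratic. destruct h; [field; lra | unfold Rdiv; ring].
Qed.

Lemma vertex_quadratic_torsion :
  (forall x, degree G x = 1%nat -> W x = 0) ->
  (forall x, degree G x <> 1%nat ->
     esum G (fun i =>
       (if Nat.eqb (ehead G i) x then inder G (vertex_quadratic_deriv G W) i true else 0) +
       (if Nat.eqb (etail G i) x then inder G (vertex_quadratic_deriv G W) i false else 0)) = 0) ->
  is_torsion_function G (vertex_quadratic G W) (vertex_quadratic_deriv G W).
Proof.
  intros Hleaf Hkirch. split; [intros; apply vertex_quadratic_derivable|].
  split; [|split; [|exact Hkirch]].
  - intros x _ i j hi hj Hi Hj Ei Ej. rewrite !endval_vertex_quadratic by assumption. congruence.
  - intros x Hx i hi Hi Ei. rewrite endval_vertex_quadratic, Ei by assumption. auto.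
Qed.

Lemma RInt_edge_quadratic (A B l : R) : 0 < l ->
  Defs.RInt (fun t => A + B * t / l + t * (l - t) / 2) 0 l = l * (A + (A + B)) / 2 + l ^ 3 / 12.
Proof.
  intros Hl.
  assert (HI : is_RInt (fun t => A + B * t / l + t * (l - t) / 2) 0 l
                 (l * (A + (A + B)) / 2 + l ^ 3 / 12)).
  { replace (l * (A + (A + B)) / 2 + l ^ 3 / 12) with
      (minus (A * l + B * l ^ 2 / (2 * l) + l * l ^ 2 / 4 - l ^ 3 / 6)
             (A * 0 + B * 0 ^ 2 / (2 * l) + l * 0 ^ 2 / 4 - 0 ^ 3 / 6))
      by (unfold minus, plus, opp; simpl; field; lra).
    apply (is_RInt_derive (fun t => A * t + B * t ^ 2 / (2 * l) + l * t ^ 2 / 4 - t ^ 3 / 6)).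
    - intros t _. auto_derive; auto. field. lra.
    - intros t _. apply (continuous_of_derivable _ (fun t => B / l + l / 2 - t)).
      intros s. apply is_derive_Reals. auto_derive; auto. field. lra. }
  rewrite Defs_RInt_eq by (eexists; exact HI).
  exact (is_RInt_unique _ _ _ _ HI).
Qed.

Lemma gint_vertex_quadratic : gint G (vertex_quadratic G W) = quadratic_rigidity G W.
Proof.
  unfold gint, quadratic_rigidity. apply esum_ext. intros i Hi.
  unfold vertex_quadratic. rewrite RInt_edge_quadratic by auto. f_equal. f_equal. f_equal. ring.
Qed.

End VertexQuadratic.

(** * The graphs G1 and G2 *)

Ltac positivity :=
  repeat first [apply Rplus_lt_0_compat | apply Rmult_lt_0_compat | apply pow_lt]; try lra.

Lemma G1_elen_pos (x y z : R) (i : nat) : 0 < x -> 0 < y -> 0 < z ->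
  (i < length (G1 x y z))%nat -> 0 < elen (G1 x y z) i.
Proof.
  intros Hx Hy Hz Hi. simpl in Hi.
  do 15 (destruct i as [|i]; [unfold elen; simpl; lra|]). lia.
Qed.

Lemma G1_degree_internal (x y z : R) (v : nat) : (v <= 6)%nat -> degree (G1 x y z) v = 3%nat.
Proof. intros Hv. do 7 (destruct v as [|v]; [reflexivity|]). lia. Qed.

Lemma G1_degree_leaf (x y z : R) (v : nat) : (7 <= v <= 15)%nat -> degree (G1 x y z) v = 1%nat.
Proof. intros Hv. do 16 (destruct v as [|v]; [first [lia | reflexivity]|]). lia. Qed.

(* [arm_conductance_num q r M p / arm_conductance_den L p M q r] is the effective conductance,
   seen from the root, of an arm made of an edge [L] to a vertex carrying a pendant edge [p]
   and an edge [M] to a vertex carrying pendant edges [q] and [r]. *)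
Definition arm_conductance_num (q r M p : R) : R := q * r + (M + p) * (q + r).
Definition arm_conductance_den (L p M q r : R) : R :=
  p * (q * r + M * (q + r)) + L * arm_conductance_num q r M p.

Definition G1_torsion_den (x y z : R) : R :=
    arm_conductance_num x z (2 * y) x * arm_conductance_den (2 * x) y (2 * z) x y
      * arm_conductance_den (2 * y) z (2 * x) y z
  + arm_conductance_num x y (2 * z) y * arm_conductance_den (2 * z) x (2 * y) x z
      * arm_conductance_den (2 * y) z (2 * x) y z
  + arm_conductance_num y z (2 * x) z * arm_conductance_den (2 * z) x (2 * y) x z
      * arm_conductance_den (2 * x) y (2 * z) x y.

(* Solution of the Kirchhoff system for the values of the torsion function at o, m1, m2, m3,
   w1, w2, w3 (vertices 0..6), all over the common denominator [2 * G1_torsion_den]. *)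
Definition G1_torsion_num (x y z : R) (v : nat) : R :=
  match v with
  | 0%nat =>
      112 * y^4 * z^6 + 224 * y^5 * z^5 + 96 * y^6 * z^4 + 432 * x * y^3 * z^6
      + 1472 * x * y^4 * z^5 + 1436 * x * y^5 * z^4 + 400 * x * y^6 * z^3
      + 624 * x^2 * y^2 * z^6 + 3254 * x^2 * y^3 * z^5 + 5208 * x^2 * y^4 * z^4
      + 3218 * x^2 * y^5 * z^3 + 624 * x^2 * y^6 * z^2 + 400 * x^3 * y * z^6
      + 3218 * x^3 * y^2 * z^5 + 7711 * x^3 * y^3 * z^4 + 7711 * x^3 * y^4 * z^3
      + 3254 * x^3 * y^5 * z^2 + 432 * x^3 * y^6 * z + 96 * x^4 * z^6 + 1436 * x^4 * y * z^5
      + 5208 * x^4 * y^2 * z^4 + 7711 * x^4 * y^3 * z^3 + 5208 * x^4 * y^4 * z^2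
      + 1472 * x^4 * y^5 * z + 112 * x^4 * y^6 + 224 * x^5 * z^5 + 1472 * x^5 * y * z^4
      + 3254 * x^5 * y^2 * z^3 + 3218 * x^5 * y^3 * z^2 + 1436 * x^5 * y^4 * z
      + 224 * x^5 * y^5 + 112 * x^6 * z^4 + 432 * x^6 * y * z^3 + 624 * x^6 * y^2 * z^2
      + 400 * x^6 * y^3 * z + 96 * x^6 * y^4
  | 1%nat =>
      64 * x * y^3 * z^6 + 264 * x * y^4 * z^5 + 320 * x * y^5 * z^4 + 112 * x * y^6 * z^3
      + 176 * x^2 * y^2 * z^6 + 1048 * x^2 * y^3 * z^5 + 2012 * x^2 * y^4 * z^4
      + 1462 * x^2 * y^5 * z^3 + 336 * x^2 * y^6 * z^2 + 160 * x^3 * y * z^6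
      + 1412 * x^3 * y^2 * z^5 + 3971 * x^3 * y^3 * z^4 + 4549 * x^3 * y^4 * z^3
      + 2182 * x^3 * y^5 * z^2 + 336 * x^3 * y^6 * z + 48 * x^4 * z^6 + 756 * x^4 * y * z^5
      + 3188 * x^4 * y^2 * z^4 + 5325 * x^4 * y^3 * z^3 + 3992 * x^4 * y^4 * z^2
      + 1264 * x^4 * y^5 * z + 112 * x^4 * y^6 + 128 * x^5 * z^5 + 992 * x^5 * y * z^4
      + 2450 * x^5 * y^2 * z^3 + 2654 * x^5 * y^3 * z^2 + 1292 * x^5 * y^4 * z
      + 224 * x^5 * y^5 + 80 * x^6 * z^4 + 336 * x^6 * y * z^3 + 528 * x^6 * y^2 * z^2
      + 368 * x^6 * y^3 * z + 96 * x^6 * y^4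
  | 2%nat =>
      112 * y^4 * z^6 + 224 * y^5 * z^5 + 96 * y^6 * z^4 + 336 * x * y^3 * z^6
      + 1264 * x * y^4 * z^5 + 1292 * x * y^5 * z^4 + 368 * x * y^6 * z^3
      + 336 * x^2 * y^2 * z^6 + 2182 * x^2 * y^3 * z^5 + 3992 * x^2 * y^4 * z^4
      + 2654 * x^2 * y^5 * z^3 + 528 * x^2 * y^6 * z^2 + 112 * x^3 * y * z^6
      + 1462 * x^3 * y^2 * z^5 + 4549 * x^3 * y^3 * z^4 + 5325 * x^3 * y^4 * z^3
      + 2450 * x^3 * y^5 * z^2 + 336 * x^3 * y^6 * z + 320 * x^4 * y * z^5
      + 2012 * x^4 * y^2 * z^4 + 3971 * x^4 * y^3 * z^3 + 3188 * x^4 * y^4 * z^2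
      + 992 * x^4 * y^5 * z + 80 * x^4 * y^6 + 264 * x^5 * y * z^4 + 1048 * x^5 * y^2 * z^3
      + 1412 * x^5 * y^3 * z^2 + 756 * x^5 * y^4 * z + 128 * x^5 * y^5 + 64 * x^6 * y * z^3
      + 176 * x^6 * y^2 * z^2 + 160 * x^6 * y^3 * z + 48 * x^6 * y^4
  | 3%nat =>
      80 * y^4 * z^6 + 128 * y^5 * z^5 + 48 * y^6 * z^4 + 336 * x * y^3 * z^6
      + 992 * x * y^4 * z^5 + 756 * x * y^5 * z^4 + 160 * x * y^6 * z^3
      + 528 * x^2 * y^2 * z^6 + 2450 * x^2 * y^3 * z^5 + 3188 * x^2 * y^4 * z^4
      + 1412 * x^2 * y^5 * z^3 + 176 * x^2 * y^6 * z^2 + 368 * x^3 * y * z^6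
      + 2654 * x^3 * y^2 * z^5 + 5325 * x^3 * y^3 * z^4 + 3971 * x^3 * y^4 * z^3
      + 1048 * x^3 * y^5 * z^2 + 64 * x^3 * y^6 * z + 96 * x^4 * z^6 + 1292 * x^4 * y * z^5
      + 3992 * x^4 * y^2 * z^4 + 4549 * x^4 * y^3 * z^3 + 2012 * x^4 * y^4 * z^2
      + 264 * x^4 * y^5 * z + 224 * x^5 * z^5 + 1264 * x^5 * y * z^4
      + 2182 * x^5 * y^2 * z^3 + 1462 * x^5 * y^3 * z^2 + 320 * x^5 * y^4 * z
      + 112 * x^6 * z^4 + 336 * x^6 * y * z^3 + 336 * x^6 * y^2 * z^2 + 112 * x^6 * y^3 * z
  | 4%nat =>
      32 * x * y^3 * z^6 + 136 * x * y^4 * z^5 + 176 * x * y^5 * z^4 + 64 * x * y^6 * z^3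
      + 112 * x^2 * y^2 * z^6 + 608 * x^2 * y^3 * z^5 + 1064 * x^2 * y^4 * z^4
      + 680 * x^2 * y^5 * z^3 + 128 * x^2 * y^6 * z^2 + 128 * x^3 * y * z^6
      + 956 * x^3 * y^2 * z^5 + 2273 * x^3 * y^3 * z^4 + 2109 * x^3 * y^4 * z^3
      + 736 * x^3 * y^5 * z^2 + 64 * x^3 * y^6 * z + 48 * x^4 * z^6 + 612 * x^4 * y * z^5
      + 2092 * x^4 * y^2 * z^4 + 2687 * x^4 * y^3 * z^3 + 1396 * x^4 * y^4 * z^2
      + 232 * x^4 * y^5 * z + 128 * x^5 * z^5 + 784 * x^5 * y * z^4 + 1426 * x^5 * y^2 * z^3
      + 1018 * x^5 * y^3 * z^2 + 248 * x^5 * y^4 * z + 80 * x^6 * z^4 + 240 * x^6 * y * z^3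
      + 240 * x^6 * y^2 * z^2 + 80 * x^6 * y^3 * z
  | 5%nat =>
      64 * x * y^3 * z^6 + 232 * x * y^4 * z^5 + 248 * x * y^5 * z^4 + 80 * x * y^6 * z^3
      + 128 * x^2 * y^2 * z^6 + 736 * x^2 * y^3 * z^5 + 1396 * x^2 * y^4 * z^4
      + 1018 * x^2 * y^5 * z^3 + 240 * x^2 * y^6 * z^2 + 64 * x^3 * y * z^6
      + 680 * x^3 * y^2 * z^5 + 2109 * x^3 * y^3 * z^4 + 2687 * x^3 * y^4 * z^3
      + 1426 * x^3 * y^5 * z^2 + 240 * x^3 * y^6 * z + 176 * x^4 * y * z^5
      + 1064 * x^4 * y^2 * z^4 + 2273 * x^4 * y^3 * z^3 + 2092 * x^4 * y^4 * z^2
      + 784 * x^4 * y^5 * z + 80 * x^4 * y^6 + 136 * x^5 * y * z^4 + 608 * x^5 * y^2 * z^3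
      + 956 * x^5 * y^3 * z^2 + 612 * x^5 * y^4 * z + 128 * x^5 * y^5 + 32 * x^6 * y * z^3
      + 112 * x^6 * y^2 * z^2 + 128 * x^6 * y^3 * z + 48 * x^6 * y^4
  | 6%nat =>
      80 * y^4 * z^6 + 128 * y^5 * z^5 + 48 * y^6 * z^4 + 240 * x * y^3 * z^6
      + 784 * x * y^4 * z^5 + 612 * x * y^5 * z^4 + 128 * x * y^6 * z^3
      + 240 * x^2 * y^2 * z^6 + 1426 * x^2 * y^3 * z^5 + 2092 * x^2 * y^4 * z^4
      + 956 * x^2 * y^5 * z^3 + 112 * x^2 * y^6 * z^2 + 80 * x^3 * y * z^6
      + 1018 * x^3 * y^2 * z^5 + 2687 * x^3 * y^3 * z^4 + 2273 * x^3 * y^4 * z^3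
      + 608 * x^3 * y^5 * z^2 + 32 * x^3 * y^6 * z + 248 * x^4 * y * z^5
      + 1396 * x^4 * y^2 * z^4 + 2109 * x^4 * y^3 * z^3 + 1064 * x^4 * y^4 * z^2
      + 136 * x^4 * y^5 * z + 232 * x^5 * y * z^4 + 736 * x^5 * y^2 * z^3
      + 680 * x^5 * y^3 * z^2 + 176 * x^5 * y^4 * z + 64 * x^6 * y * z^3
      + 128 * x^6 * y^2 * z^2 + 64 * x^6 * y^3 * z
  | _ => 0
  end.

Definition G1_torsion_value (x y z : R) (v : nat) : R :=
  G1_torsion_num x y z v / (2 * G1_torsion_den x y z).

Definition rigidity_gap_factor (x y z : R) : R :=
  44 * y^3 * z^5 + 92 * y^4 * z^4 + 44 * y^5 * z^3 + 132 * x * y^2 * z^5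
  + 508 * x * y^3 * z^4 + 508 * x * y^4 * z^3 + 132 * x * y^5 * z^2 + 132 * x^2 * y * z^5
  + 832 * x^2 * y^2 * z^4 + 1452 * x^2 * y^3 * z^3 + 832 * x^2 * y^4 * z^2
  + 132 * x^2 * y^5 * z + 44 * x^3 * z^5 + 508 * x^3 * y * z^4 + 1452 * x^3 * y^2 * z^3
  + 1452 * x^3 * y^3 * z^2 + 508 * x^3 * y^4 * z + 44 * x^3 * y^5 + 92 * x^4 * z^4
  + 508 * x^4 * y * z^3 + 832 * x^4 * y^2 * z^2 + 508 * x^4 * y^3 * z + 92 * x^4 * y^4
  + 44 * x^5 * z^3 + 132 * x^5 * y * z^2 + 132 * x^5 * y^2 * z + 44 * x^5 * y^3.

Lemma G1_torsion_den_pos (x y z : R) : 0 < x -> 0 < y -> 0 < z -> 0 < G1_torsion_den x y z.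
Proof.
  intros. unfold G1_torsion_den, arm_conductance_den, arm_conductance_num. positivity.
Qed.

Lemma G1_torsion_den_swap (x y z : R) : G1_torsion_den x z y = G1_torsion_den x y z.
Proof. unfold G1_torsion_den, arm_conductance_den, arm_conductance_num. ring. Qed.

Lemma rigidity_gap_factor_pos (x y z : R) : 0 < x -> 0 < y -> 0 < z ->
  0 < rigidity_gap_factor x y z.
Proof. intros. unfold rigidity_gap_factor. positivity. Qed.

Lemma G1_torsion_kirchhoff (x y z : R) : 0 < x -> 0 < y -> 0 < z ->
  forall v, degree (G1 x y z) v <> 1%nat ->
  esum (G1 x y z) (fun i =>
    (if Nat.eqb (ehead (G1 x y z) i) v
     then inder (G1 x y z) (vertex_quadratic_deriv (G1 x y z) (G1_torsion_value x y z)) i true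
     else 0) +
    (if Nat.eqb (etail (G1 x y z) i) v
     then inder (G1 x y z) (vertex_quadratic_deriv (G1 x y z) (G1_torsion_value x y z)) i false
     else 0)) = 0.
Proof.
  intros Hx Hy Hz v Hv. pose proof (G1_torsion_den_pos x y z Hx Hy Hz).
  destruct (Nat.le_gt_cases v 6) as [Hv6|Hv6].
  - do 7 (destruct v as [|v];
      [ unfold esum, inder, vertex_quadratic_deriv; simpl; unfold elen, ehead, etail; simpl;
        cbv beta iota delta [G1_torsion_value G1_torsion_num];
        unfold G1_torsion_den, arm_conductance_den, arm_conductance_num in *;
        field; lra |]).
    lia.
  - destruct (Nat.le_gt_cases v 15) as [Hv15|Hv15].
    + exfalso. apply Hv, G1_degree_leaf. lia.
    + do 16 (destruct v as [|v]; [lia|]). unfold esum. simpl. ring.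
Qed.

Lemma G1_is_torsion_function (x y z : R) : 0 < x -> 0 < y -> 0 < z ->
  is_torsion_function (G1 x y z) (vertex_quadratic (G1 x y z) (G1_torsion_value x y z))
    (vertex_quadratic_deriv (G1 x y z) (G1_torsion_value x y z)).
Proof.
  intros Hx Hy Hz.
  apply vertex_quadratic_torsion;
    [intros; apply G1_elen_pos; auto | | apply G1_torsion_kirchhoff; auto].
  intros v Hv. destruct (Nat.le_gt_cases v 6) as [Hv6|Hv6].
  - rewrite G1_degree_internal in Hv by exact Hv6. discriminate.
  - do 7 (destruct v as [|v]; [lia|]). unfold G1_torsion_value. simpl. unfold Rdiv. ring.
Qed.

Lemma G1_heat_data (x y z : R) (lam : nat -> R) (phi : nat -> nat -> R -> R) :
  0 < x -> 0 < y -> 0 < z -> eigenbasis (G1 x y z) lam phi ->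
  heat_data lam (fun n => gint (G1 x y z) (phi n) ^ 2)
    (fun n => lam n * ip (G1 x y z) (vertex_quadratic (G1 x y z) (G1_torsion_value x y z))
                                    (phi n) ^ 2)
    (ip (G1 x y z) (fun _ _ => 1) (fun _ _ => 1))
    (quadratic_rigidity (G1 x y z) (G1_torsion_value x y z)).
Proof.
  intros Hx Hy Hz Hbasis.
  assert (Hlen : forall i, (i < length (G1 x y z))%nat -> 0 < elen (G1 x y z) i)
    by (intros; apply G1_elen_pos; auto).
  rewrite <- gint_vertex_quadratic by exact Hlen.
  apply (eigenbasis_heat_data (G1 x y z))
    with (dw := vertex_quadratic_deriv (G1 x y z) (G1_torsion_value x y z)).
  - intros i Hi. left. auto.
  - apply G1_is_torsion_function; auto.
  - exact Hbasis.
Qed.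

Lemma G1_rigidity_swap (a b c : R) : 0 < a -> 0 < b -> 0 < c ->
  (quadratic_rigidity (G1 a b c) (G1_torsion_value a b c)
   - quadratic_rigidity (G1 a c b) (G1_torsion_value a c b)) * G1_torsion_den a b c
  = - ((b - c) * (a - b) * (a - c)) * rigidity_gap_factor a b c.
Proof.
  intros Ha Hb Hc. pose proof (G1_torsion_den_pos a b c Ha Hb Hc).
  unfold quadratic_rigidity, esum. simpl. unfold elen, ehead, etail. simpl.
  cbv beta iota delta [G1_torsion_value G1_torsion_num]. rewrite (G1_torsion_den_swap a b c).
  unfold rigidity_gap_factor.
  field. lra.
Qed.

Lemma G1_rigidity_swap_ne (a b c : R) : 0 < a -> 0 < b -> 0 < c -> a <> b -> b <> c -> a <> c ->
  quadratic_rigidity (G1 a b c) (G1_torsion_value a b c)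
  <> quadratic_rigidity (G1 a c b) (G1_torsion_value a c b).
Proof.
  intros Ha Hb Hc Hab Hbc Hac Heq.
  pose proof (G1_rigidity_swap a b c Ha Hb Hc) as Hswap.
  rewrite Heq, Rminus_diag, Rmult_0_l in Hswap.
  pose proof (rigidity_gap_factor_pos a b c Ha Hb Hc).
  assert (Hprod : (b - c) * (a - b) * (a - c) <> 0).
  { repeat apply Rmult_integral_contrapositive_currified; lra. }
  apply Hprod. apply Rmult_eq_reg_r with (rigidity_gap_factor a b c); lra.
Qed.

Theorem mainTheorem3 (a b c : R) :
  0 < a -> 0 < b -> 0 < c -> a <> b -> b <> c -> a <> c ->
  forall (lam1 : nat -> R) (phi1 : nat -> nat -> R -> R)
         (lam2 : nat -> R) (phi2 : nat -> nat -> R -> R),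
    eigenbasis (G1 a b c) lam1 phi1 ->
    eigenbasis (G2 a b c) lam2 phi2 ->
    exists t : R, 0 < t /\
      exists q1 q2 : R,
        heat_content (G1 a b c) lam1 phi1 t q1 /\
        heat_content (G2 a b c) lam2 phi2 t q2 /\
        q1 <> q2.
Proof.
  intros Ha Hb Hc Hab Hbc Hac lam1 phi1 lam2 phi2 H1 H2.
  change (G2 a b c) with (G1 a c b) in *.
  pose proof (G1_heat_data a b c lam1 phi1 Ha Hb Hc H1) as D1.
  pose proof (G1_heat_data a c b lam2 phi2 Ha Hc Hb H2) as D2.
  apply NNPP. intros Hsame.
  apply (G1_rigidity_swap_ne a b c Ha Hb Hc Hab Hbc Hac).
  apply (heat_data_total_unique _ _ _ _ _ _ _ _ _ _ D1 D2).
  intros t Ht. apply NNPP. intros Hne. apply Hsame.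
  exists t. split; [exact Ht|].
  exists (heat_series lam1 (fun n => gint (G1 a b c) (phi1 n) ^ 2) t),
         (heat_series lam2 (fun n => gint (G1 a c b) (phi2 n) ^ 2) t).
  split; [|split; [|exact Hne]];
    [apply (heat_series_sum _ _ _ _ _ D1) | apply (heat_series_sum _ _ _ _ _ D2)]; lra.
Qed.
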